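(* Let $\alpha>0$, $\sigma>0$, and let $\mathcal S$, $\mathcal T_\alpha$, $\mathcal F_\alpha$, $E_h$ be the linear operators on the polynomial space $\mathbb C[z]$ described in the context. Then, as linear operators on $\mathbb C[z]$, $$\mathcal S=E_{\sigma/\alpha}\,\mathcal T_\alpha,\qquad \mathcal S^{-1}=\mathcal F_\alpha\,E_{-\sigma/\alpha}.$$
   Context: Let $\pi_{\alpha,\sigma}=\exp(-\sigma/\alpha^2)\sum_{n\ge0}\frac{1}{n!}(\sigma/\alpha^2)^n\delta_{\alpha n}$ on $\alpha\mathbb N_0$, and let $(c_n)_{n\ge0}$ be the monic polynomials orthogonal with respect to $\pi_{\alpha,\sigma}$, with generating function $\sum_{n\ge0}\frac{t^n}{n!}c_n(z)=\exp\big(\frac z\alpha\log(1+t\alpha)-\frac{\sigma t}{\alpha}\big)$. Let $\mathcal S$ denote the linear bijection of $\mathbb C[z]$ defined by $\mathcal Sc_n(z)=z^n$ for $n\in\mathbb N_0$ (this is the restriction to polynomials of the generalized Segal--Bargmann transform, the unitary $L^2(\alpha\mathbb N_0,\pi_{\alpha,\sigma})\to\mathbb F_\sigma(\mathbb C)$ with $c_n\mapsto z^n$). For $h\in\mathbb C$, $E_h$ is the shift $(E_hp)(z)=p(z+h)$. Let $S(n,k)$ and $s(n,k)$ be the Stirling numbers of the second and first kind, so $z^n=\sum_{k=1}^nS(n,k)(z)_k$ and $(z)_n=\sum_{k=1}^ns(n,k)z^k$ with $(z)_n=z(z-1)\cdots(z-n+1)$. Define $T_{\alpha,0}=1$, $T_{\alpha,n}(z)=\sum_{k=1}^nS(n,k)\alpha^{n-k}z^k$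 ($n\ge1$), and let $\mathcal T_\alpha$ be the linear operator on $\mathbb C[z]$ with $\mathcal T_\alpha z^n=T_{\alpha,n}(z)$. Define $(z\mid\alpha)_0=1$, $(z\mid\alpha)_n=z(z-\alpha)\cdots(z-(n-1)\alpha)$, and let $\mathcal F_\alpha$ be the linear operator on $\mathbb C[z]$ with $\mathcal F_\alpha z^n=(z\mid\alpha)_n$. *)

From HB Require Import structures.
From mathcomp Require Import all_boot all_order all_algebra.
Set Implicit Arguments. Unset Strict Implicit. Unset Printing Implicit Defensive.
Import Order.TTheory GRing.Theory Num.Theory.
Local Open Scope ring_scope.

(* The coefficient field C: any numeric algebraically closed field
   (the complex numbers are an instance). *)
Section Defs.
Variable C : numClosedFieldType.

(* ---------- formal power series in t with coefficients in C[z] ---------- *)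
Definition pseries := nat -> {poly C}.

Definition ps_one : pseries := fun n => (n == 0%N)%:R.
Definition ps_mul (f g : pseries) : pseries :=
  fun n => \sum_(i < n.+1) f i * g (n - i)%N.
Definition ps_pow (f : pseries) (m : nat) : pseries := iter m (ps_mul f) ps_one.

(* exp(f) for a series f with zero constant term:
   [t^n] exp f = sum_{m <= n} [t^n] f^m / m!  (higher m contribute 0). *)
Definition ps_exp (f : pseries) : pseries :=
  fun n => \sum_(m < n.+1) ((m`!)%:R)^-1 *: ps_pow f m n.

(* log(1 + t a) = sum_{k>=1} (-1)^(k+1) a^k t^k / k *)
Definition ps_log1p (a : C) : pseries :=
  fun n => if n == 0%N then 0 else ((-1) ^+ n.+1 * a ^+ n / n%:R)%:P.

(* the exponent  (z/alpha) log(1 + t alpha) - sigma t / alpha *)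
Definition charlier_exponent (alpha sigma : C) : pseries :=
  fun n => (alpha^-1 *: 'X) * ps_log1p alpha n
           - (if n == 1%N then (sigma / alpha)%:P else 0).

Definition charlier (alpha sigma : C) (n : nat) : {poly C} :=
  (n`!)%:R *: ps_exp (charlier_exponent alpha sigma) n.

Fixpoint stirling2 (n k : nat) : nat :=
  match n, k with
  | 0, 0 => 1
  | 0, _.+1 => 0
  | _.+1, 0 => 0
  | n'.+1, k'.+1 => (k'.+1 * stirling2 n' k'.+1 + stirling2 n' k')%N
  end.

Definition Tpoly (alpha : C) (n : nat) : {poly C} :=
  if n == 0%N then 1
  else \sum_(1 <= k < n.+1) ((stirling2 n k)%:R * alpha ^+ (n - k)) *: 'X^k.

Definition gen_falling (alpha : C) (n : nat) : {poly C} :=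
  \prod_(i < n) ('X - (i%:R * alpha)%:P).

Definition lin_ext (b : nat -> {poly C}) (p : {poly C}) : {poly C} :=
  \sum_(n < size p) p`_n *: b n.

Definition opT (alpha : C) := lin_ext (Tpoly alpha).
Definition opF (alpha : C) := lin_ext (gen_falling alpha).

Definition shift (h : C) (p : {poly C}) : {poly C} := p \Po ('X + h%:P).

End Defs.

From HB Require Import structures.
From mathcomp Require Import all_boot all_order all_algebra.
From mathcomp Require Import zify ring.
Import Order.TTheory GRing.Theory Num.Theory.
Local Open Scope ring_scope.

(* Write lam = sigma / alpha.  Both identities reduce to two facts about the
   inverse map z^n |-> c_n of S.  First, F_alpha T_alpha = id, which is the
   Stirling expansion z^n = sum_k S(n,k) alpha^(n-k) (z|alpha)_k.  Second,
   c_n = F_alpha ((z - lam)^n): both sides satisfy the three-term recurrence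
   u_(n+2) = (z - lam - (n+1) alpha) u_(n+1) - (n+1) lam alpha u_n.  For c_n
   it comes from the differential equation (1 + alpha t) E' =
   (z - lam - lam alpha t) E of the generating function E, for
   F_alpha ((z - lam)^n) from F_alpha (z p) = z F_alpha p - alpha F_alpha (z p'). *)

Set Implicit Arguments. Unset Strict Implicit.

Lemma eq_rec2 (T : Type) (u v : nat -> T) (step : nat -> T -> T -> T) :
  u 0 = v 0 -> u 1 = v 1 ->
  (forall k, u k.+2 = step k (u k.+1) (u k)) ->
  (forall k, v k.+2 = step k (v k.+1) (v k)) -> u =1 v.
Proof.
move=> u0 u1 urec vrec n.
suff [] : u n = v n /\ u n.+1 = v n.+1 by [].
elim: n => [|n [IHn IHSn]]; first by [].
by split; rewrite // urec vrec IHn IHSn.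
Qed.

Section LinearExtension.
Variable C : numClosedFieldType.
Implicit Types (b : nat -> {poly C}) (p : {poly C}).

Lemma lin_ext_widen b p N : (size p <= N)%N ->
  lin_ext b p = \sum_(k < N) p`_k *: b k.
Proof.
move=> hN; rewrite /lin_ext (big_ord_widen N (fun k => p`_k *: b k) hN).
rewrite big_mkcond /=; apply: eq_bigr => i _; case: ltnP => // hi.
by rewrite nth_default ?scale0r.
Qed.

Lemma lin_ext_is_linear b : linear (lin_ext b).
Proof.
move=> a p q; set N := maxn (size p) (size q).
have hpq : (size (a *: p + q)%R <= N)%N.
  rewrite (leq_trans (size_polyD _ _)) // geq_max.
  by rewrite !(leq_trans (size_scale_leq _ _)) ?leq_maxl ?leq_maxr.
rewrite (lin_ext_widen b hpq) (lin_ext_widen b (leq_maxl (size p) (size q))).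
rewrite (lin_ext_widen b (leq_maxr (size p) (size q))).
rewrite scaler_sumr -big_split /=; apply: eq_bigr => i _.
by rewrite coefD coefZ scalerDl scalerA.
Qed.

HB.instance Definition _ b :=
  GRing.isLinear.Build C {poly C} {poly C} _ (lin_ext b) (lin_ext_is_linear b).

HB.instance Definition _ (alpha : C) := GRing.Linear.on (opF alpha).
HB.instance Definition _ (alpha : C) := GRing.Linear.on (opT alpha).

Lemma lin_extXn b n : lin_ext b 'X^n = b n.
Proof.
rewrite (lin_ext_widen _ (leqnn _)) size_polyXn big_ord_recr /= big1 ?add0r.
  by rewrite coefXn eqxx scale1r.
by move=> i _; rewrite coefXn (ltn_eqF (ltn_ord i)) scale0r.
Qed.

Lemma linear_polyXn_eq (f g : {linear {poly C} -> {poly C}}) :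
  (forall n, f 'X^n = g 'X^n) -> f =1 g.
Proof.
move=> fg p; rewrite -[p]coefK poly_def !linear_sum; apply: eq_bigr => i _.
by rewrite !linearZ /= fg.
Qed.

Lemma shift_is_linear (h : C) : linear (shift h).
Proof. by move=> a p q; rewrite /shift comp_polyD comp_polyZ. Qed.

HB.instance Definition _ h :=
  GRing.isLinear.Build C {poly C} {poly C} _ (shift h) (shift_is_linear h).

Lemma shiftXn (h : C) n : shift h 'X^n = ('X + h%:P) ^+ n.
Proof. exact: comp_Xn_poly. Qed.

Lemma shiftNK (h : C) p : shift (- h) (shift h p) = p.
Proof. by rewrite /shift polyCN comp_polyXaddC_K. Qed.

End LinearExtension.

Section Stirling.
Variables (C : numClosedFieldType) (alpha : C).
Local Notation g := (gen_falling alpha).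

Lemma stirling2_small n k : (n < k)%N -> stirling2 n k = 0%N.
Proof. by elim: n k => [|n IHn] [|k] //= ltnk; rewrite !IHn // ?muln0 // ltnW. Qed.

Lemma mulX_gen_falling k : 'X * g k = g k.+1 + (k%:R * alpha) *: g k.
Proof.
rewrite /gen_falling big_ord_recr /= mulrBr -mul_polyC.
by rewrite [_ * _%:P]mulrC subrK mulrC.
Qed.

Lemma Tpoly_sum n : Tpoly alpha n =
  \sum_(k < n.+1) ((stirling2 n k)%:R * alpha ^+ (n - k)) *: 'X^k.
Proof.
rewrite /Tpoly; case: n => [|n] /=; first by rewrite big_ord1 mul1r scale1r.
by rewrite [RHS]big_ord_recl /= mul0r scale0r add0r big_add1 big_mkord.
Qed.

(* The Stirling recurrence S(n+1,k+1) = (k+1) S(n,k+1) + S(n,k) matches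
   z (z|alpha)_k = (z|alpha)_(k+1) + k alpha (z|alpha)_k. *)
Lemma stirling2_gen_falling n M : (n < M)%N ->
  \sum_(k < M) ((stirling2 n k)%:R * alpha ^+ (n - k)) *: g k = 'X^n.
Proof.
elim: n M => [|n IHn] [|M] // ltnM.
  rewrite big_ord_recl big1 ?addr0; first by rewrite mul1r scale1r /gen_falling big_ord0.
  by move=> i _; rewrite mul0r scale0r.
rewrite exprS -(IHn M ltnM) mulr_sumr.
under [RHS]eq_bigr => i _ do rewrite -scalerAr mulX_gen_falling scalerDr scalerA.
rewrite big_split /= big_ord_recl /= mul0r scale0r add0r.
under eq_bigr => i _ do rewrite subSS natrD mulrDl scalerDl.
rewrite big_split /= addrC; congr (_ + _).
case: M ltnM => // M ltnM.
rewrite [RHS]big_ord_recl [LHS]big_ord_recr /= mul0r mulr0 scale0r add0r.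
rewrite add0n (@stirling2_small n M.+1) // muln0 mul0r scale0r addr0.
apply: eq_bigr => i _; rewrite /bump /= !add1n add0n.
have [lein|ltni] := leqP i.+1 n; last by rewrite stirling2_small // !muln0 !mul0r.
rewrite -[in LHS](subnSK lein) exprS natrM; congr (_ *: _); rewrite mulrS; ring.
Qed.

Lemma opF_Tpoly n : opF alpha (Tpoly alpha n) = 'X^n.
Proof.
rewrite /opF Tpoly_sum linear_sum -(stirling2_gen_falling (ltnSn n)).
by apply: eq_bigr => k _; rewrite linearZ /= lin_extXn.
Qed.

Lemma opF_opT p : opF alpha (opT alpha p) = p.
Proof.
apply: (linear_polyXn_eq (f := opF alpha \o opT alpha) (g := idfun)) => n /=.
by rewrite /opT lin_extXn opF_Tpoly.
Qed.

End Stirling.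

Section LowCoefficients.
Variable R : nzRingType.
Implicit Types (A B L Q : {poly R}).

Lemma coefM_low_eq0 A B m : (forall j, (j < m)%N -> B`_j = 0) ->
  forall j, (j < m)%N -> (A * B)`_j = 0.
Proof.
move=> B0 j ltjm; rewrite coefM big1 // => i _.
by rewrite B0 ?mulr0 //; have := ltn_ord i; lia.
Qed.

Lemma coefM_low_eq L A B K : (forall i, (i < K)%N -> A`_i = B`_i) ->
  forall j, (j < K)%N -> (L * A)`_j = (L * B)`_j.
Proof.
move=> eqAB j ltjK; rewrite !coefM; apply: eq_bigr => i _.
by rewrite eqAB //; have := ltn_ord i; lia.
Qed.

Lemma coefX_low_eq0 Q m : Q`_0 = 0 -> forall j, (j < m)%N -> (Q ^+ m)`_j = 0.
Proof.
move=> Q0; elim: m => [|m IHm] j ltjm //; rewrite exprS coefM big1 // => i _.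
case: (nat_of_ord i) (ltn_ord i) => [|i'] ltij; first by rewrite Q0 mul0r.
by rewrite IHm ?mulr0 //; lia.
Qed.

End LowCoefficients.

Lemma invfactS_mulrn (F : numFieldType) n :
  ((n.+1)`!%:R^-1 : F) *+ n.+1 = (n`!%:R)^-1.
Proof.
have n1_neq0 : 1 + n%:R != 0 :> F by rewrite addrC natr1 pnatr_eq0.
have fact_neq0 : n`!%:R != 0 :> F by rewrite pnatr_eq0 -lt0n fact_gt0.
rewrite factS natrM -mulr_natr; field; by rewrite n1_neq0 fact_neq0.
Qed.

Section CharlierRecurrence.
Variables (C : numClosedFieldType) (alpha sigma : C).
Hypothesis alpha_neq0 : alpha != 0.
Local Notation PS := {poly {poly C}}.
Local Notation f := (charlier_exponent alpha sigma).
Local Notation lam := (sigma / alpha).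

Definition exponent_trunc N : PS := \poly_(i < N) f i.
Definition exp_trunc N : PS :=
  \sum_(m < N) ((m`!%:R)^-1)%:P *: exponent_trunc N ^+ m.

Lemma charlier_exponent0 : f 0 = 0.
Proof. by rewrite /charlier_exponent /ps_log1p /= mulr0 subr0. Qed.

Lemma charlier_exponentS j :
  f j.+1 *+ j.+1 = (- alpha) ^+ j *: 'X - (if j == 0%N then lam%:P else 0).
Proof.
rewrite /charlier_exponent /ps_log1p /= mulrnBl mulrC mul_polyC scalerA scalerMnl.
congr (_ *: _ - _); last by case: j => [|j] /=; rewrite ?mul0rn.
have j1_neq0 : 1 + j%:R != 0 :> C by rewrite addrC natr1 pnatr_eq0.
rewrite -mulr_natr [RHS]exprNn !exprS; field; by rewrite alpha_neq0 j1_neq0.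
Qed.

Lemma exponent_trunc_coef0 N : (exponent_trunc N)`_0 = 0.
Proof. by rewrite coef_poly; case: N => // N; rewrite charlier_exponent0. Qed.

Lemma ps_pow_trunc N m n : (n < N)%N -> ps_pow f m n = (exponent_trunc N ^+ m)`_n.
Proof.
elim: m n => [|m IHm] n ltnN; first by rewrite expr0 coef1.
rewrite exprS coefM; apply: eq_bigr => i _; have := ltn_ord i => ltin.
by rewrite -IHm ?coef_poly ?ifT //; lia.
Qed.

Lemma ps_exp_trunc N n : (n < N)%N -> ps_exp f n = (exp_trunc N)`_n.
Proof.
move=> ltnN; rewrite /ps_exp /exp_trunc coef_sum.
rewrite (big_ord_widen N (fun m => (m`!%:R)^-1 *: ps_pow f m n) ltnN) big_mkcond /=.
apply: eq_bigr => i _; rewrite coefZ mul_polyC -(ps_pow_trunc i ltnN).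
case: ltnP => // ltni.
by rewrite (ps_pow_trunc i ltnN) (coefX_low_eq0 (exponent_trunc_coef0 N)) ?scaler0.
Qed.

Lemma deriv_exp_trunc K : (exp_trunc K.+1)^`() =
  (exponent_trunc K.+1)^`() * exp_trunc K.+1
  - ((K`!%:R)^-1)%:P *: ((exponent_trunc K.+1)^`() * exponent_trunc K.+1 ^+ K).
Proof.
rewrite /exp_trunc raddf_sum /= big_ord_recl /= derivZ expr0 derivC scaler0 add0r.
rewrite mulr_sumr big_ord_recr /= -scalerAr addrK; apply: eq_bigr => i _.
rewrite derivZ deriv_exp /= add0n -scalerMnr scalerMnl -polyCMn invfactS_mulrn.
by rewrite scalerAr.
Qed.

(* The outer variable is t and the inner one z.  Since
   f = (z/alpha) log(1 + alpha t) - lam t, we have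
   (1 + alpha t) f' = (z - lam) - lam alpha t, hence E = exp f satisfies
   (1 + alpha t) E' = ((z - lam) - lam alpha t) E. *)
Local Notation ode_lhs := (1 + alpha%:P *: 'X : PS).
Local Notation ode_rhs := (('X - lam%:P)%:P - (lam * alpha)%:P *: 'X : PS).

Lemma exponent_trunc_ode K j : (j < K)%N ->
  (ode_lhs * (exponent_trunc K.+1)^`())`_j = ode_rhs`_j.
Proof.
move=> ltjK; rewrite mulrDl mul1r -scalerAl coefD coefZ coefXM.
rewrite coefB coefZ coefX coefC !coef_deriv !coef_poly.
case: j ltjK => [|j] ltjK /=.
  by rewrite ifT // !mulr0 addr0 subr0 (charlier_exponentS 0) /= expr0 scale1r.
rewrite !ifT ?charlier_exponentS; [|lia..].
case: j ltjK => [|j] _ /=.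
  by rewrite expr1 mulr1 subr0 -!mul_polyC polyCN polyCM; ring.
by rewrite !subr0 mulr0 subr0 -!mul_polyC exprS polyCM polyC_exp polyCN; ring.
Qed.

Lemma exp_trunc_ode K j : (j < K)%N ->
  (ode_lhs * (exp_trunc K.+1)^`())`_j = (ode_rhs * exp_trunc K.+1)`_j.
Proof.
move=> ltjK.
have deriv_low i : (i < K)%N -> ((exp_trunc K.+1)^`())`_i =
    ((exponent_trunc K.+1)^`() * exp_trunc K.+1)`_i.
  move=> ltiK; rewrite deriv_exp_trunc coefB coefZ.
  by rewrite (coefM_low_eq0 _ (coefX_low_eq0 (exponent_trunc_coef0 _))) ?mulr0 ?subr0.
rewrite (coefM_low_eq _ deriv_low ltjK) mulrA mulrC.
by rewrite (coefM_low_eq _ (fun i lt_iK => exponent_trunc_ode lt_iK) ltjK) mulrC.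
Qed.

Lemma ps_exp0 : ps_exp f 0 = 1.
Proof. by rewrite /ps_exp big_ord1 /= /ps_one /= invr1 scale1r. Qed.

Lemma ps_exp1 : ps_exp f 1 = 'X - lam%:P.
Proof.
have := exp_trunc_ode (K := 1) (j := 0) erefl.
rewrite mulrDl mul1r -scalerAl coefD coefZ coefXM /= coef_deriv mulr0 addr0.
rewrite mulrBl -scalerAl coefB coefCM coefZ coefXM /= mulr0 subr0.
by rewrite -!(ps_exp_trunc (N := 2)) // ps_exp0 mulr1.
Qed.

Lemma ps_expSS k :
  ps_exp f k.+2 *+ k.+2 + alpha%:P * (ps_exp f k.+1 *+ k.+1) =
  ('X - lam%:P) * ps_exp f k.+1 - (lam * alpha)%:P * ps_exp f k.
Proof.
have := exp_trunc_ode (K := k.+2) (j := k.+1) (ltnSn _).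
rewrite mulrDl mul1r -scalerAl coefD coefZ coefXM /= !coef_deriv.
rewrite mulrBl -scalerAl coefB coefCM coefZ coefXM /=.
by rewrite -!(ps_exp_trunc (N := k.+3)) //; lia.
Qed.

Local Notation c := (charlier alpha sigma).

Lemma charlier0 : c 0 = 1.
Proof. by rewrite /charlier ps_exp0 scale1r. Qed.

Lemma charlier1 : c 1 = 'X - lam%:P.
Proof. by rewrite /charlier ps_exp1 scale1r. Qed.

Lemma charlierSS k : c k.+2 =
  ('X - (lam + k.+1%:R * alpha)%:P) * c k.+1 - (k.+1%:R * lam * alpha)%:P * c k.
Proof.
have recE : ps_exp f k.+2 *+ k.+2 = ('X - lam%:P) * ps_exp f k.+1
   - (lam * alpha)%:P * ps_exp f k - alpha%:P * (ps_exp f k.+1 *+ k.+1).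
  by rewrite -ps_expSS addrK.
rewrite /charlier factS natrM -scalerA scaler_nat scalerMnr recE (factS k) natrM.
rewrite -scaler_nat; move: (ps_exp f k) (ps_exp f k.+1) (k.+1%:R : C) (k`!%:R : C).
by move=> e0 e1 k1 kf; rewrite -!mul_polyC !(polyCM, polyCD, polyCB); ring.
Qed.

End CharlierRecurrence.

Section ShiftedPowers.
Variables (C : numClosedFieldType) (alpha lam : C).
Local Notation F := (opF alpha).

Lemma mulX_derivXn n : ('X : {poly C}) * ('X^n)^`() = 'X^n *+ n.
Proof. by case: n => [|n]; rewrite derivXn ?mulr0n ?mulr0 // mulrnAr -exprS. Qed.

Lemma opF_mulX p : F ('X * p) = 'X * F p - alpha%:P * F ('X * p^`()).
Proof.
pose L : {linear {poly C} -> {poly C}} := F.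
have LXn n : L 'X^n = gen_falling alpha n by apply: lin_extXn.
change (L ('X * p) = 'X * L p - alpha%:P * L ('X * p^`())); clearbody L.
rewrite -[p]coefK poly_def (raddf_sum deriv) /= !mulr_sumr !linear_sum.
rewrite !mulr_sumr -sumrB; apply: eq_bigr => i _.
rewrite derivZ -!scalerAr !linearZ /= mulX_derivXn raddfMn /= -exprS !LXn.
rewrite -scalerAr mulX_gen_falling -!mul_polyC polyCM -mulr_natr; ring.
Qed.

Local Notation d n := (F (('X - lam%:P) ^+ n)).

Lemma opF_XsubC_exp0 : d 0 = 1.
Proof. by rewrite expr0 -(expr0 'X) /opF lin_extXn /gen_falling big_ord0. Qed.

Lemma opF_XsubC_exp1 : d 1 = 'X - lam%:P.
Proof.
rewrite expr1 -alg_polyC -['X]expr1 -(expr0 'X) /opF linearB linearZ /= !lin_extXn.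
by rewrite /gen_falling big_ord1 big_ord0 mul0r subr0 alg_polyC.
Qed.

Lemma opF_XsubC_expSS k : d k.+2 =
  ('X - (lam + k.+1%:R * alpha)%:P) * d k.+1 - (k.+1%:R * lam * alpha)%:P * d k.
Proof.
set q : {poly C} := 'X - lam%:P.
have qSS : q ^+ k.+2 = 'X * q ^+ k.+1 - lam *: q ^+ k.+1.
  by rewrite -mul_polyC -mulrBl exprS.
have mulX_deriv : 'X * (q ^+ k.+1)^`() = (q ^+ k.+1 + lam *: q ^+ k) *+ k.+1.
  rewrite deriv_exp derivXsubC mul1r /= mulrnAr exprS -mul_polyC; congr (_ *+ _).
  by rewrite /q; ring.
rewrite qSS linearB linearZ /= opF_mulX mulX_deriv raddfMn raddfD /= linearZ /=.
move: (F (q ^+ k.+1)) (F (q ^+ k)) => a b.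
by rewrite -!mul_polyC -mulr_natr !(polyCD, polyCM) polyC1 polyC_natr -mulr_natr; ring.
Qed.

End ShiftedPowers.

Lemma charlier_opF (C : numClosedFieldType) (alpha sigma : C) :
  alpha != 0 -> forall n,
  charlier alpha sigma n = opF alpha (('X - (sigma / alpha)%:P) ^+ n).
Proof.
move=> alpha_neq0; set lam := sigma / alpha.
apply: (eq_rec2 (step := fun k x y =>
  ('X - (lam + k.+1%:R * alpha)%:P) * x - (k.+1%:R * lam * alpha)%:P * y)).
- by rewrite charlier0 opF_XsubC_exp0.
- by rewrite charlier1 // opF_XsubC_exp1.
- exact: charlierSS.
- exact: opF_XsubC_expSS.
Qed.

Theorem proposition4p4 (C : numClosedFieldType) (alpha sigma : C)
  (halpha : 0 < alpha) (hsigma : 0 < sigma)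
  (S : {linear {poly C} -> {poly C}})
  (hS : forall n : nat, S (charlier alpha sigma n) = 'X^n) :
  (forall p : {poly C}, S p = shift (sigma / alpha) (opT alpha p)) /\
  (forall p : {poly C},
     S (opF alpha (shift (- (sigma / alpha)) p)) = p /\
     opF alpha (shift (- (sigma / alpha)) (S p)) = p).
Proof.
have alpha_neq0 : alpha != 0 by rewrite gt_eqF.
set lam := sigma / alpha.
have S_opF_shift p : S (opF alpha (shift (- lam) p)) = p.
  apply: (linear_polyXn_eq (f := S \o opF alpha \o shift (- lam))
                           (g := idfun)) => n /=.
  by rewrite shiftXn polyCN -charlier_opF.
have opF_shift_opT p : opF alpha (shift (- lam) (shift lam (opT alpha p))) = p.
  by rewrite shiftNK opF_opT.
have S_eq p : S p = shift lam (opT alpha p).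
  by rewrite -{1}(opF_shift_opT p) S_opF_shift.
by split=> // p; split; [exact: S_opF_shift | rewrite S_eq].
Qed.
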